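(* Let $\mathcal R$ be a left-linear TRS. (1) If $t \leftarrow^{p}_{\mathcal R} s \to^{\epsilon}_{\mathcal B^\pm} u$ is a critical peak (from an overlap of a rule of $\mathcal R$ at position $p$ into a pair of $\mathcal B^\pm$), then there is a term $v$ with $t\,\nabla_s\, v$ and $v\,\tilde\nabla_s\, u$. (2) If $t \leftarrow^{p}_{\mathcal B^\pm} s \to^{\epsilon}_{\mathcal R} u$ is a critical peak (from an overlap of a pair of $\mathcal B^\pm$ at position $p$ into a rule of $\mathcal R$), then there is a term $v$ with $v\,\tilde\nabla_s\, t$ and $v\,\nabla_s\, u$.
   Context: Terms are built from a signature $\mathcal F$ and variables $\mathcal V$. A rule $\ell\to r$ is a pair of terms with $\ell\notin\mathcal V$ and $\mathrm{Var}(r)\subseteq\mathrm{Var}(\ell)$; a TRS is a set of rules, an ES a set of equations. For a set $\mathcal E$ of pairs of terms, $s\to_{\mathcal E}t$ iff $s|_p=\ell\sigma$ and $t=s[r\sigma]_p$ for some $(\ell,r)\in\mathcal E$, position $p$ and substitution $\sigma$ (written $\to^p_{\mathcal E}$ to make $p$ explicit); $\leftarrow_{\mathcal E}$ is its inverse and $\leftrightarrow_{\mathcal E}$ its symmetric closure. $\mathcal B$ is a fixed ES with $\mathrm{Var}(\ell)=\mathrm{Var}(r)$ for all $\ell\approx r\in\mathcal B$; $\sim_{\mathcal B}=\leftrightarrow^*_{\mathcal B}$ and $\mathcal B^\pm=\mathcal B\cup\{t\approx s\mid s\approx t\in\mathcal B\}$. For a TRS $\mathcal R$: $\downarrow_{\mathcal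 R}=\to^*_{\mathcal R}\cdot\leftarrow^*_{\mathcal R}$ and $s\downarrow^\sim_{\mathcal R}t$ iff $s\to^*_{\mathcal R}\cdot\sim_{\mathcal B}\cdot\leftarrow^*_{\mathcal R}t$. Critical pairs: for sets of oriented pairs $\mathcal R_1,\mathcal R_2$ (equations of $\mathcal B^\pm$ read as oriented pairs), an overlap is $\langle\ell_1\to r_1,p,\ell_2\to r_2\rangle$ with $\ell_i\to r_i$ variants of elements of $\mathcal R_i$ without common variables, $p$ a non-variable position of $\ell_2$, $\ell_1$ and $\ell_2|_p$ unifiable, and the two rules not variants of each other if $p=\epsilon$. With an mgu $\sigma$ this yields the critical peak $\ell_2\sigma[r_1\sigma]_p\leftarrow^p\ell_2\sigma\to^\epsilon r_2\sigma$ and critical pair $\ell_2\sigma[r_1\sigma]_p\approx r_2\sigma$. A critical peak $t\leftarrow^p s\to^\epsilon u$ is prime if all proper subterms of $s|_p$ are normal forms of $\to_{\mathcal R}$ (irreducibility is always checked w.r.t. $\mathcal R$, also for overlaps involving $\mathcal B^\pm$). $\mathrm{PCP}(\mathcal R)$ is the set of prime critical pairs from overlaps of $\mathcal R$ with itself; $\mathrm{PCP}^\pm(\mathcal R,\mathcal B^\pm)$ is the set of prime critical pairs from overlaps $\langle\rho_1,p,\rho_2\rangle$ with $\rho_1\in\mathcal R,\rho_2\in\mathcal B^\pm$ or $\rho_1\in\mathcal B^\pm,\rho_2\in\mathcal R$. Triangle notation: $t\,\nabla_s\,u$ iff $s\to^+_{\mathcal R}t$, $s\to^+_{\mathcal R}u$,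 and ($t\downarrow_{\mathcal R}u$ or $t\leftrightarrow_{\mathrm{PCP}(\mathcal R)}u$). $t\,\tilde\nabla_s\,u$ iff $s\to^+_{\mathcal R}t$, $s\sim_{\mathcal B}u$, and ($t\downarrow^\sim_{\mathcal R}u$ or $t\leftrightarrow_{\mathrm{PCP}^\pm(\mathcal R,\mathcal B^\pm)}u$). *)

From Stdlib Require Import List Relations.
Import ListNotations.
Set Implicit Arguments.

Section Terms.
Variable F : Type.

(* Terms over function symbols F and variables nat (symbols are unranked). *)
Inductive term : Type :=
| Var : nat -> term
| Fun : F -> list term -> term.

Fixpoint vars (t : term) : list nat :=
  match t with
  | Var x => [x]
  | Fun _ ts => (fix go (l : list term) : list nat :=
                   match l with [] => [] | u :: l' => vars u ++ go l' end) ts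
  end.

Fixpoint subst (s : nat -> term) (t : term) : term :=
  match t with
  | Var x => s x
  | Fun f ts => Fun f (map (subst s) ts)
  end.

(* subterm at a position (positions are lists of 0-based argument indices) *)
Fixpoint subterm_at (t : term) (p : list nat) : option term :=
  match p with
  | [] => Some t
  | i :: q => match t with
              | Var _ => None
              | Fun _ ts => match nth_error ts i with
                            | Some u => subterm_at u q
                            | None => None
                            end
              end
  end.

(* t[u]_p (unchanged if p is not a position of t) *)
Fixpoint replace_at (t : term) (p : list nat) (u : term) : term :=
  match p with
  | [] => u
  | i :: q => match t with
              | Var _ => t
              | Fun f ts =>
                  Fun f ((fix go (k : nat) (l : list term) : list term :=
                            match l, k with
                            | [], _ => []
                            | a :: l', 0 => replace_at a q u :: l'
                            | a :: l', S k' => a :: go k' l'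
                            end) i ts)
              end
  end.

Definition trs := term -> term -> Prop.

Definition is_trs (R : trs) : Prop :=
  forall l r, R l r -> (forall x, l <> Var x) /\ (forall x, In x (vars r) -> In x (vars l)).

Definition left_linear (R : trs) : Prop := forall l r, R l r -> NoDup (vars l).

Definition same_vars_es (B : trs) : Prop :=
  forall l r, B l r -> forall x, In x (vars l) <-> In x (vars r).

Definition sym_pairs (B : trs) : trs := fun l r => B l r \/ B r l.

Definition rstep_at (E : trs) (p : list nat) (s t : term) : Prop :=
  exists l r sg, E l r /\ subterm_at s p = Some (subst sg l) /\ t = replace_at s p (subst sg r).

Definition rstep (E : trs) (s t : term) : Prop := exists p, rstep_at E p s t.

Definition conv_step (E : trs) (s t : term) : Prop := rstep E s t \/ rstep E t s.

Definition plus_step (R : trs) := clos_trans term (rstep R).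
Definition star_step (R : trs) := clos_refl_trans term (rstep R).

Definition simB (B : trs) := clos_refl_trans term (conv_step B).

Definition joinable (R : trs) (t u : term) : Prop :=
  exists w, star_step R t w /\ star_step R u w.

Definition joinable_mod (R B : trs) (t u : term) : Prop :=
  exists w1 w2, star_step R t w1 /\ simB B w1 w2 /\ star_step R u w2.

Definition normal_form (R : trs) (t : term) : Prop := forall t', ~ rstep R t t'.

Definition bijective_ren (pi : nat -> nat) : Prop :=
  exists pi', forall x, pi' (pi x) = x /\ pi (pi' x) = x.

Definition rename (pi : nat -> nat) (t : term) : term := subst (fun x => Var (pi x)) t.

Definition variant_rules (l1 r1 l2 r2 : term) : Prop :=
  exists pi, bijective_ren pi /\ l1 = rename pi l2 /\ r1 = rename pi r2.

Definition variant_of (E : trs) (l' r' : term) : Prop :=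
  exists l r, E l r /\ variant_rules l' r' l r.

Definition unifies (sg : nat -> term) (a b : term) : Prop := subst sg a = subst sg b.

Definition is_mgu (sg : nat -> term) (a b : term) : Prop :=
  unifies sg a b /\
  forall tau, unifies tau a b -> exists dl, forall x, tau x = subst dl (sg x).

Definition critical_peak (R1 R2 : trs) (t s u : term) (p : list nat) : Prop :=
  exists l1 r1 l2 r2 sg l2p,
    variant_of R1 l1 r1 /\ variant_of R2 l2 r2 /\
    (forall x, In x (vars l1 ++ vars r1) -> ~ In x (vars l2 ++ vars r2)) /\
    subterm_at l2 p = Some l2p /\ (forall x, l2p <> Var x) /\
    (p = [] -> ~ variant_rules l1 r1 l2 r2) /\
    is_mgu sg l1 l2p /\
    s = subst sg l2 /\ t = replace_at s p (subst sg r1) /\ u = subst sg r2.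

Definition prime_peak (R : trs) (s : term) (p : list nat) : Prop :=
  forall sp, subterm_at s p = Some sp ->
  forall q w, q <> [] -> subterm_at sp q = Some w -> normal_form R w.

Definition PCP (R : trs) : trs := fun t u =>
  exists s p, critical_peak R R t s u p /\ prime_peak R s p.

Definition PCPpm (R Bpm : trs) : trs := fun t u =>
  exists s p, (critical_peak R Bpm t s u p \/ critical_peak Bpm R t s u p) /\ prime_peak R s p.

Definition nabla (R : trs) (s t u : term) : Prop :=
  plus_step R s t /\ plus_step R s u /\ (joinable R t u \/ conv_step (PCP R) t u).

Definition tnabla (R B : trs) (s t u : term) : Prop :=
  plus_step R s t /\ simB B s u /\
  (joinable_mod R B t u \/ conv_step (PCPpm R (sym_pairs B)) t u).

End Terms.

(* If the peak is prime, [t] and [u] form a prime critical pair and [v] is [t] (resp. [u]).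
   Otherwise some proper subterm of [s|_p] is reducible, and [v] contracts an innermost such
   redex, at position [p ++ q]. Relative to the rule applied at [p], and relative to the rule
   applied at the root, this redex lies either below a variable of the rule, in which case [v]
   and the contractum of the rule are joinable (modulo [B] for a pair of [B^pm]), or at a
   non-variable position, in which case, being innermost, it is an instance of a prime
   critical overlap placed in a context. *)

From Stdlib Require Import List Relations Arith Lia Classical.
Import ListNotations.

Arguments Var {F} _.

Section Rewriting.
Variable F : Type.

Fixpoint term_nested_ind (P : term F -> Prop) (HV : forall x, P (Var x))
  (HF : forall f ts, Forall P ts -> P (Fun f ts)) (t : term F) : P t :=
  match t with
  | Var x => HV x
  | Fun f ts =>
      HF f ts ((fix go (l : list (term F)) : Forall P l :=
                  match l with
                  | [] => Forall_nil _
                  | a :: l' => Forall_cons _ (term_nested_ind P HV HF a) (go l')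
                  end) ts)
  end.

Fixpoint size (t : term F) : nat :=
  match t with Var _ => 1 | Fun _ ts => S (list_sum (map size ts)) end.

Lemma vars_Fun f ts : vars (Fun f ts) = flat_map (@vars F) ts.
Proof. induction ts; simpl; auto. Qed.

Lemma subst_comp (sg1 sg2 : nat -> term F) t :
  subst sg2 (subst sg1 t) = subst (fun x => subst sg2 (sg1 x)) t.
Proof.
  induction t using term_nested_ind; simpl; auto.
  f_equal. rewrite map_map. apply map_ext_in. rewrite Forall_forall in H. auto.
Qed.

Lemma subst_ext_in (sg1 sg2 : nat -> term F) t :
  (forall x, In x (vars t) -> sg1 x = sg2 x) -> subst sg1 t = subst sg2 t.
Proof.
  induction t using term_nested_ind; intros Hx.
  - apply Hx; simpl; auto.
  - simpl. f_equal. apply map_ext_in. rewrite Forall_forall in H. intros a Ha.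
    apply H; auto. intros x Hx'. apply Hx. rewrite vars_Fun. apply in_flat_map. eauto.
Qed.

Lemma subst_var_id (t : term F) : subst Var t = t.
Proof.
  induction t using term_nested_ind; simpl; auto. f_equal.
  rewrite Forall_forall in H. rewrite <- (map_id ts) at 2. apply map_ext_in. auto.
Qed.

Lemma in_vars_subst (sg : nat -> term F) t y :
  In y (vars (subst sg t)) -> exists z, In z (vars t) /\ In y (vars (sg z)).
Proof.
  induction t using term_nested_ind; intros Hy.
  - exists x; simpl; auto.
  - simpl subst in Hy. rewrite vars_Fun, in_flat_map in Hy. rewrite vars_Fun.
    destruct Hy as [b [Hb Hyb]]. apply in_map_iff in Hb. destruct Hb as [a [<- Ha]].
    rewrite Forall_forall in H. destruct (H a Ha Hyb) as [z [Hz1 Hz2]].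
    exists z; split; auto. apply in_flat_map; eauto.
Qed.

Lemma size_In f ts a : In a ts -> size a < size (Fun f ts).
Proof.
  intros H. simpl. induction ts; simpl in *; [destruct H|].
  destruct H as [->|H]; [lia|]. specialize (IHts H). lia.
Qed.

Lemma size_var_le (sg : nat -> term F) t x :
  In x (vars t) -> size (sg x) <= size (subst sg t).
Proof.
  induction t using term_nested_ind; intros Hx.
  - simpl in *. destruct Hx as [<-|[]]; auto.
  - rewrite vars_Fun, in_flat_map in Hx. destruct Hx as [a [Ha Hxa]].
    rewrite Forall_forall in H. specialize (H a Ha Hxa).
    assert (size (subst sg a) < size (subst sg (Fun f ts))).
    { simpl subst. apply size_In, in_map; auto. }
    lia.
Qed.

Lemma size_var_lt (sg : nat -> term F) t x :
  In x (vars t) -> t <> Var x -> size (sg x) < size (subst sg t).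
Proof.
  destruct t as [y|f ts]; intros Hx Hne.
  - simpl in *. destruct Hx as [<-|[]]; congruence.
  - rewrite vars_Fun, in_flat_map in Hx. destruct Hx as [a [Ha Hxa]].
    pose proof (size_var_le sg a x Hxa).
    assert (size (subst sg a) < size (subst sg (Fun f ts))).
    { simpl subst. apply size_In, in_map; auto. }
    lia.
Qed.

Definition update_subst (sg : nat -> term F) x (v : term F) : nat -> term F :=
  fun y => if Nat.eq_dec y x then v else sg y.

Fixpoint upd_nth {A} (g : A -> A) (k : nat) (l : list A) : list A :=
  match l, k with
  | [], _ => []
  | a :: l', 0 => g a :: l'
  | a :: l', S k' => a :: upd_nth g k' l'
  end.

Lemma upd_nth_ext {A} (g h : A -> A) ts i a :
  nth_error ts i = Some a -> g a = h a -> upd_nth g i ts = upd_nth h i ts.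
Proof.
  revert i; induction ts; intros [|i]; simpl; intros H1 H2; try discriminate.
  - inversion H1; subst. congruence.
  - f_equal; eauto.
Qed.

Lemma upd_nth_id {A} (g : A -> A) ts i a :
  nth_error ts i = Some a -> g a = a -> upd_nth g i ts = ts.
Proof.
  revert i; induction ts; intros [|i]; simpl; intros H1 H2; try discriminate.
  - inversion H1; subst. congruence.
  - f_equal; eauto.
Qed.

Lemma nth_error_upd_nth {A} (g : A -> A) ts i a :
  nth_error ts i = Some a -> nth_error (upd_nth g i ts) i = Some (g a).
Proof.
  revert i; induction ts; intros [|i]; simpl; intros H1; try discriminate.
  - inversion H1; subst; auto.
  - eauto.
Qed.

Lemma upd_nth_upd_nth {A} (g h : A -> A) ts i :
  upd_nth h i (upd_nth g i ts) = upd_nth (fun a => h (g a)) i ts.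
Proof. revert i; induction ts; intros [|i]; simpl; auto. f_equal; auto. Qed.

Lemma map_upd_nth {A B} (m : A -> B) (g : A -> A) (g' : B -> B) ts i a :
  nth_error ts i = Some a -> m (g a) = g' (m a) ->
  map m (upd_nth g i ts) = upd_nth g' i (map m ts).
Proof.
  revert i; induction ts; intros [|i]; simpl; intros H1 H2; try discriminate.
  - inversion H1; subst. congruence.
  - f_equal; eauto.
Qed.

Lemma upd_nth_app {A} (g : A -> A) pre a post :
  upd_nth g (length pre) (pre ++ a :: post) = pre ++ g a :: post.
Proof. induction pre; simpl; auto. f_equal; auto. Qed.

Lemma app_neq_nil_r {A} (p : list A) {q} : q <> [] -> p ++ q <> [].
Proof. intros Hq He. apply app_eq_nil in He. tauto. Qed.

Lemma replace_at_Fun f ts i q (u : term F) :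
  replace_at (Fun f ts) (i :: q) u = Fun f (upd_nth (fun a => replace_at a q u) i ts).
Proof.
  simpl. f_equal. revert i. induction ts; intros [|i]; simpl; auto. f_equal. auto.
Qed.

Lemma subterm_at_app (t u : term F) p q :
  subterm_at t p = Some u -> subterm_at t (p ++ q) = subterm_at u q.
Proof.
  revert t; induction p; intros t H; simpl in *; [congruence|].
  destruct t; [discriminate|]. destruct (nth_error l a); [auto|discriminate].
Qed.

Lemma replace_at_app (t u w : term F) p q :
  subterm_at t p = Some u -> replace_at t (p ++ q) w = replace_at t p (replace_at u q w).
Proof.
  revert t; induction p; intros t H; simpl in H.
  - inversion H; subst. reflexivity.
  - destruct t as [x|f ts]; try discriminate.
    destruct (nth_error ts a) as [b|] eqn:E; try discriminate.
    simpl app. rewrite !replace_at_Fun. f_equal. eapply upd_nth_ext; eauto.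
Qed.

Lemma subterm_at_replace_at (t u w : term F) p :
  subterm_at t p = Some u -> subterm_at (replace_at t p w) p = Some w.
Proof.
  revert t; induction p; intros t H; simpl in H; auto.
  destruct t as [x|f ts]; try discriminate.
  destruct (nth_error ts a) as [b|] eqn:E; try discriminate.
  rewrite replace_at_Fun. simpl. erewrite nth_error_upd_nth; eauto.
Qed.

Lemma replace_at_replace_at (t u w w' : term F) p :
  subterm_at t p = Some u -> replace_at (replace_at t p w) p w' = replace_at t p w'.
Proof.
  revert t; induction p; intros t H; simpl in H; auto.
  destruct t as [x|f ts]; try discriminate.
  destruct (nth_error ts a) as [b|] eqn:E; try discriminate.
  rewrite !replace_at_Fun. f_equal. rewrite upd_nth_upd_nth. eapply upd_nth_ext; eauto.
Qed.

Lemma replace_at_subterm_at (t u : term F) p :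
  subterm_at t p = Some u -> replace_at t p u = t.
Proof.
  revert t; induction p; intros t H; simpl in H.
  - inversion H; subst. reflexivity.
  - destruct t as [x|f ts]; try discriminate.
    destruct (nth_error ts a) as [b|] eqn:E; try discriminate.
    rewrite replace_at_Fun. f_equal. eapply upd_nth_id; eauto.
Qed.

Lemma subterm_at_subst (sg : nat -> term F) a b q :
  subterm_at a q = Some b -> subterm_at (subst sg a) q = Some (subst sg b).
Proof.
  revert a; induction q; intros t H; simpl in H.
  - inversion H; subst. reflexivity.
  - destruct t as [x|f ts]; try discriminate.
    destruct (nth_error ts a) as [c|] eqn:E; try discriminate.
    simpl. rewrite nth_error_map, E. simpl. auto.
Qed.

Lemma replace_at_subst (sg : nat -> term F) a b c q :
  subterm_at a q = Some b ->
  subst sg (replace_at a q c) = replace_at (subst sg a) q (subst sg c).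
Proof.
  revert a; induction q; intros t H; simpl in H.
  - reflexivity.
  - destruct t as [x|f ts]; try discriminate.
    destruct (nth_error ts a) as [d|] eqn:E; try discriminate.
    rewrite !replace_at_Fun. simpl subst. rewrite !replace_at_Fun. f_equal.
    eapply map_upd_nth; eauto.
Qed.

Lemma subterm_at_vars (a b : term F) q :
  subterm_at a q = Some b -> incl (vars b) (vars a).
Proof.
  revert a; induction q; intros t H; simpl in H.
  - inversion H; subst. apply incl_refl.
  - destruct t as [x|f ts]; try discriminate.
    destruct (nth_error ts a) as [d|] eqn:E; try discriminate.
    intros y Hy. rewrite vars_Fun. apply in_flat_map. exists d. split.
    + eapply nth_error_In; eauto.
    + eapply IHq; eauto.
Qed.

Lemma subterm_at_subst_cases (sg : nat -> term F) a q w :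
  subterm_at (subst sg a) q = Some w ->
  (exists a', subterm_at a q = Some a' /\ (forall x, a' <> Var x) /\ w = subst sg a') \/
  (exists q1 q2 x, q = q1 ++ q2 /\ subterm_at a q1 = Some (Var x) /\
                   subterm_at (sg x) q2 = Some w).
Proof.
  revert a; induction q; intros t H.
  - destruct t as [x|f ts].
    + right. exists [], [], x. simpl in *. auto.
    + left. exists (Fun f ts). simpl in *. inversion H; subst.
      split; auto. split; auto. congruence.
  - destruct t as [x|f ts].
    + right. exists [], (a :: q), x. simpl in *. auto.
    + simpl in H. rewrite nth_error_map in H.
      destruct (nth_error ts a) as [d|] eqn:E; simpl in H; try discriminate.
      destruct (IHq d H) as [[a' [H1 [H2 H3]]]|[q1 [q2 [x [H1 [H2 H3]]]]]].
      * left. exists a'. simpl. rewrite E. auto.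
      * right. exists (a :: q1), q2, x. simpl. rewrite E. subst. auto.
Qed.

Lemma rstep_at_ctx (E : trs F) p q s a b :
  rstep_at E q a b -> subterm_at s p = Some a -> rstep_at E (p ++ q) s (replace_at s p b).
Proof.
  intros [l [r [sg [H1 [H2 H3]]]]] Hs. exists l, r, sg. split; auto. split.
  - rewrite (subterm_at_app _ _ _ _ Hs). auto.
  - subst b. rewrite (replace_at_app _ _ _ _ _ Hs). auto.
Qed.

Lemma rstep_replace_at (E : trs F) p s c a b :
  subterm_at s p = Some c -> rstep E a b -> rstep E (replace_at s p a) (replace_at s p b).
Proof.
  intros Hs [q Hq]. exists (p ++ q).
  rewrite <- (replace_at_replace_at _ _ a b _ Hs).
  eapply rstep_at_ctx; eauto. eapply subterm_at_replace_at; eauto.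
Qed.

Lemma star_step_replace_at (E : trs F) p s c a b :
  subterm_at s p = Some c -> star_step E a b -> star_step E (replace_at s p a) (replace_at s p b).
Proof.
  intros Hs H. induction H.
  - apply rt_step. eapply rstep_replace_at; eauto.
  - apply rt_refl.
  - eapply rt_trans; eauto.
Qed.

Lemma star_step_args (E : trs F) f ts us pre :
  Forall2 (star_step E) ts us -> star_step E (Fun f (pre ++ ts)) (Fun f (pre ++ us)).
Proof.
  intros H. revert pre. induction H; intros pre; [apply rt_refl|].
  eapply rt_trans.
  - assert (Hpos : subterm_at (Fun f (pre ++ x :: l)) [length pre] = Some x).
    { simpl. rewrite nth_error_app2, Nat.sub_diag by lia. reflexivity. }
    pose proof (star_step_replace_at E _ _ _ x y Hpos H) as Hc.
    rewrite !replace_at_Fun, !upd_nth_app in Hc. exact Hc.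
  - specialize (IHForall2 (pre ++ [y])). rewrite <- !app_assoc in IHForall2. exact IHForall2.
Qed.

Lemma star_step_subst (E : trs F) (sg sg' : nat -> term F) t :
  (forall x, star_step E (sg x) (sg' x)) -> star_step E (subst sg t) (subst sg' t).
Proof.
  intros Hx. induction t using term_nested_ind; simpl; auto.
  apply (star_step_args E f _ _ []). induction H; simpl; constructor; auto.
Qed.

Lemma rstep_at_subst (E : trs F) p a b (sg : nat -> term F) :
  rstep_at E p a b -> rstep_at E p (subst sg a) (subst sg b).
Proof.
  intros [l [r [dl [H1 [H2 H3]]]]]. exists l, r, (fun x => subst sg (dl x)). split; auto.
  split.
  - rewrite <- subst_comp. apply subterm_at_subst; auto.
  - subst b. rewrite <- subst_comp. eapply replace_at_subst; eauto.
Qed.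

Lemma rstep_at_variant (E : trs F) l r s p (sg : nat -> term F) :
  variant_of E l r -> subterm_at s p = Some (subst sg l) ->
  rstep_at E p s (replace_at s p (subst sg r)).
Proof.
  intros [l0 [r0 [HE [pi [_ [-> ->]]]]]] Hs. exists l0, r0, (fun x => sg (pi x)).
  unfold rename in *. rewrite !subst_comp in *. auto.
Qed.


Lemma rstep_subst_root (E : trs F) l r (sg : nat -> term F) :
  E l r -> rstep E (subst sg l) (subst sg r).
Proof. intros H. exists [], l, r, sg. simpl. auto. Qed.

Lemma rstep_root (E : trs F) a b : E a b -> rstep E a b.
Proof. intros H. rewrite <- (subst_var_id a), <- (subst_var_id b). apply rstep_subst_root, H. Qed.

Lemma rstep_variant (E : trs F) l r (sg : nat -> term F) :
  variant_of E l r -> rstep E (subst sg l) (subst sg r).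
Proof. intros Hv. exists []. apply (rstep_at_variant E l r (subst sg l) [] sg Hv). auto. Qed.

Lemma rstep_mono (E1 E2 : trs F) a b :
  (forall l r, E1 l r -> E2 l r) -> rstep E1 a b -> rstep E2 a b.
Proof. intros H [p [l [r [sg [H1 H2]]]]]. exists p, l, r, sg. auto. Qed.

Lemma rstep_sym_pairs_conv (B : trs F) a b : rstep (sym_pairs B) a b -> conv_step B a b.
Proof.
  intros [p [l [r [sg [[H1|H1] [H2 H3]]]]]].
  - left. exists p, l, r, sg. auto.
  - right. exists p, r, l, sg. split; auto. subst b. split.
    + eapply subterm_at_replace_at; eauto.
    + rewrite (replace_at_replace_at _ _ _ _ _ H2). symmetry. eapply replace_at_subterm_at; eauto.
Qed.

Lemma Forall2_map {A B} (rel : B -> B -> Prop) (m m' : A -> B) ts :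
  (forall b, In b ts -> rel (m b) (m' b)) -> Forall2 rel (map m ts) (map m' ts).
Proof. induction ts; simpl; constructor; auto. Qed.

Lemma Forall2_map_upd_nth {A B} (rel : B -> B -> Prop) (m m' : A -> B) g ts i d :
  (forall b, In b ts -> rel (m b) (m' b)) -> nth_error ts i = Some d -> rel (g (m d)) (m' d) ->
  Forall2 rel (upd_nth g i (map m ts)) (map m' ts).
Proof.
  revert i; induction ts as [|a ts IH]; intros [|i] Hts Hd Hg; simpl in Hd;
    try discriminate; simpl.
  - inversion Hd; subst. constructor; auto.
    apply Forall2_map. auto with datatypes.
  - constructor; auto with datatypes.
Qed.

Lemma star_step_replace_var (E : trs F) (sg sg' : nat -> term F) x :
  (forall y, star_step E (sg y) (sg' y)) ->
  forall q l, subterm_at l q = Some (Var x) ->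
  star_step E (replace_at (subst sg l) q (sg' x)) (subst sg' l).
Proof.
  intros Hsg q. induction q as [|i q IH]; intros l H.
  - simpl in H. inversion H; subst. apply rt_refl.
  - destruct l as [z|f ts]; simpl in H; try discriminate.
    destruct (nth_error ts i) as [d|] eqn:Ei; try discriminate.
    simpl subst. rewrite replace_at_Fun. apply (star_step_args E f _ _ []).
    apply (Forall2_map_upd_nth _ _ _ _ ts i d); auto.
    intros b _. apply star_step_subst; auto.
Qed.

(* The redex is contracted in every copy of [x], so [l] need not be linear. *)
Lemma step_below_variable (E : trs F) (sg : nat -> term F) l q1 q2 x w w' :
  subterm_at l q1 = Some (Var x) -> subterm_at (sg x) q2 = Some w -> rstep E w w' ->
  exists sg', star_step E (replace_at (subst sg l) (q1 ++ q2) w') (subst sg' l) /\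
              forall y, star_step E (sg y) (sg' y).
Proof.
  intros H1 H2 Hw.
  set (sg' := update_subst sg x (replace_at (sg x) q2 w')).
  assert (Hsg : forall y, star_step E (sg y) (sg' y)).
  { intros y. unfold sg', update_subst. destruct (Nat.eq_dec y x); [subst|apply rt_refl].
    apply rt_step. rewrite <- (replace_at_subterm_at _ _ _ H2) at 1.
    eapply rstep_replace_at; eauto. }
  exists sg'. split; auto.
  rewrite (replace_at_app _ _ _ _ _ (subterm_at_subst sg _ _ _ H1)). cbn [subst].
  replace (replace_at (sg x) q2 w') with (sg' x)
    by (unfold sg', update_subst; destruct (Nat.eq_dec x x); congruence).
  apply star_step_replace_var; auto.
Qed.

(** * Most general unifiers *)

Definition eqns := list (term F * term F).

Definition unifies_eqns (tau : nat -> term F) (E : eqns) : Prop :=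
  Forall (fun e => subst tau (fst e) = subst tau (snd e)) E.

(* An idempotent mgu: every unifier [tau] factors as [tau = subst tau o th]. *)
Definition mgu_eqns (th : nat -> term F) (E : eqns) : Prop :=
  unifies_eqns th E /\ forall tau, unifies_eqns tau E -> forall x, subst tau (th x) = tau x.

Definition eqns_vars (E : eqns) : list nat :=
  flat_map (fun e => vars (fst e) ++ vars (snd e)) E.

Definition num_vars (E : eqns) : nat := length (nodup Nat.eq_dec (eqns_vars E)).

Definition eqns_size (E : eqns) : nat :=
  list_sum (map (fun e => size (fst e) + size (snd e)) E).

Definition subst_eqns (sg : nat -> term F) (E : eqns) : eqns :=
  map (fun e => (subst sg (fst e), subst sg (snd e))) E.

Lemma num_vars_incl (E1 E2 : eqns) :
  incl (eqns_vars E1) (eqns_vars E2) -> num_vars E1 <= num_vars E2.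
Proof.
  intros H. apply NoDup_incl_length; [apply NoDup_nodup|].
  intros y Hy. rewrite nodup_In in *. auto.
Qed.

Lemma num_vars_incl_lt (E1 E2 : eqns) x :
  incl (eqns_vars E1) (eqns_vars E2) -> In x (eqns_vars E2) -> ~ In x (eqns_vars E1) ->
  num_vars E1 < num_vars E2.
Proof.
  intros H Hx Hn. change (length (x :: nodup Nat.eq_dec (eqns_vars E1)) <= num_vars E2).
  apply NoDup_incl_length.
  - constructor; [rewrite nodup_In; auto|apply NoDup_nodup].
  - intros y [<-|Hy]; apply nodup_In; auto. apply nodup_In in Hy. auto.
Qed.

Lemma unifies_eqns_subst tau sg E :
  unifies_eqns tau (subst_eqns sg E) <-> unifies_eqns (fun y => subst tau (sg y)) E.
Proof.
  unfold unifies_eqns, subst_eqns. rewrite Forall_map.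
  split; apply Forall_impl; intros e; simpl; rewrite !subst_comp; auto.
Qed.

Lemma mgu_eqns_equiv th (E1 E2 : eqns) :
  (forall tau, unifies_eqns tau E1 <-> unifies_eqns tau E2) -> mgu_eqns th E1 -> mgu_eqns th E2.
Proof.
  intros H [H1 H2]. split; [apply H; auto|]. intros tau Ht. apply H2, H. auto.
Qed.

Lemma unifies_eqns_combine tau ts us :
  length ts = length us ->
  unifies_eqns tau (combine ts us) <-> map (subst tau) ts = map (subst tau) us.
Proof.
  revert us; induction ts; intros [|u us] Hl; simpl in *; try discriminate.
  - split; constructor.
  - injection Hl; intros Hl'. unfold unifies_eqns in *. rewrite Forall_cons_iff, IHts; auto.
    simpl. split; [intros [-> ->]; auto|intros H; injection H; auto].
Qed.

Lemma eqns_vars_combine (ts us : list (term F)) :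
  incl (eqns_vars (combine ts us)) (flat_map (@vars F) ts ++ flat_map (@vars F) us).
Proof.
  revert us; induction ts; intros [|u us]; simpl; try apply incl_nil_l.
  intros y Hy. specialize (IHts us y). rewrite !in_app_iff in *. tauto.
Qed.

Lemma eqns_size_combine (ts us : list (term F)) :
  eqns_size (combine ts us) <= list_sum (map size ts) + list_sum (map size us).
Proof.
  revert us; induction ts as [|a ts IHts]; intros [|u us]; unfold eqns_size in *; simpl;
    try lia.
  specialize (IHts us). lia.
Qed.

Lemma eqns_vars_elim x b (E : eqns) :
  ~ In x (vars b) -> num_vars (subst_eqns (update_subst Var x b) E) < num_vars ((Var x, b) :: E).
Proof.
  intros Hx.
  assert (Hvars : forall y, In y (eqns_vars (subst_eqns (update_subst Var x b) E)) ->
                   y <> x /\ (In y (vars b) \/ In y (eqns_vars E))).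
  { intros y Hy. unfold eqns_vars, subst_eqns in Hy. rewrite flat_map_concat_map, map_map in Hy.
    apply in_concat in Hy. destruct Hy as [l [Hl Hyl]]. apply in_map_iff in Hl.
    destruct Hl as [e [<- He]]. simpl in Hyl.
    assert (Hz : exists z, In z (vars (fst e) ++ vars (snd e)) /\
                           In y (vars (update_subst Var x b z))).
    { apply in_app_or in Hyl.
      destruct Hyl as [Hy|Hy]; apply in_vars_subst in Hy; destruct Hy as [z [? ?]];
        exists z; auto with datatypes. }
    destruct Hz as [z [Hz Hyz]]. unfold update_subst in Hyz.
    destruct (Nat.eq_dec z x) as [->|Hzx].
    - split; auto. intros ->. auto.
    - simpl in Hyz. destruct Hyz as [<-|[]]. split; auto.
      right. apply in_flat_map. eauto. }
  apply (num_vars_incl_lt _ _ x).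
  - intros y Hy. destruct (Hvars y Hy) as [_ [?|?]]; simpl; rewrite !in_app_iff; auto.
  - simpl. auto.
  - intros Hy. apply (Hvars x Hy). reflexivity.
Qed.

Lemma subst_update_absorb tau x b t :
  subst tau b = tau x -> subst (fun y => subst tau (update_subst Var x b y)) t = subst tau t.
Proof.
  intros Hb. apply subst_ext_in. intros y _. unfold update_subst.
  destruct (Nat.eq_dec y x); subst; auto.
Qed.

Lemma mgu_eqns_nil : mgu_eqns Var [].
Proof. split; [constructor|auto]. Qed.

Lemma mgu_eqns_elim th x b (E : eqns) :
  ~ In x (vars b) -> mgu_eqns th (subst_eqns (update_subst Var x b) E) ->
  mgu_eqns (fun y => subst th (update_subst Var x b y)) ((Var x, b) :: E).
Proof.
  intros Hx [H1 H2].
  assert (Hb : forall sg, subst (fun y => subst sg (update_subst Var x b y)) b = subst sg b).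
  { intros sg. apply subst_ext_in. intros y Hy. unfold update_subst.
    destruct (Nat.eq_dec y x); subst; [contradiction|reflexivity]. }
  split.
  - constructor.
    + simpl. unfold update_subst at 1. destruct (Nat.eq_dec x x); [|congruence].
      rewrite Hb. auto.
    + apply unifies_eqns_subst. auto.
  - intros tau Htau. inversion Htau as [|? ? Hxb HE]; subst. simpl in Hxb.
    assert (Hu : unifies_eqns tau (subst_eqns (update_subst Var x b) E)).
    { apply unifies_eqns_subst. eapply Forall_impl; [|exact HE].
      intros e. rewrite !subst_update_absorb; auto. }
    intros y. rewrite subst_comp, (subst_ext_in _ tau); [|auto].
    apply (subst_update_absorb _ _ _ (Var y)). auto.
Qed.

Lemma mgu_eqns_var x b (E : eqns) :
  b <> Var x -> (exists tau, unifies_eqns tau ((Var x, b) :: E)) ->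
  (forall E', num_vars E' < num_vars ((Var x, b) :: E) ->
              (exists tau, unifies_eqns tau E') -> exists th, mgu_eqns th E') ->
  exists th, mgu_eqns th ((Var x, b) :: E).
Proof.
  intros Hb [tau Htau] IH. inversion Htau as [|? ? Hxb HE]; subst. simpl in Hxb.
  destruct (in_dec Nat.eq_dec x (vars b)) as [Hin|Hnin].
  - pose proof (size_var_lt tau b x Hin Hb). rewrite Hxb in H. lia.
  - destruct (IH (subst_eqns (update_subst Var x b) E)) as [th Hth].
    + apply eqns_vars_elim. auto.
    + exists tau. apply unifies_eqns_subst. eapply Forall_impl; [|exact HE].
      intros e. rewrite !subst_update_absorb; auto.
    + eexists. apply mgu_eqns_elim; eauto.
Qed.

(* Robinson's algorithm, terminating by the number of variables and then the size. *)
Lemma mgu_eqns_exists_bounded n : forall m (E : eqns),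
  num_vars E < n -> eqns_size E < m -> (exists tau, unifies_eqns tau E) ->
  exists th, mgu_eqns th E.
Proof.
  induction n as [|n IHn]; intros m E Hn; [lia|]. revert E Hn.
  induction m as [|m IHm]; intros E Hn Hm Hu; [lia|].
  assert (IHvar : forall E', num_vars E' < n -> (exists tau, unifies_eqns tau E') ->
                             exists th, mgu_eqns th E')
    by (intros E' H1 H2; exact (IHn (S (eqns_size E')) E' H1 (Nat.lt_succ_diag_r _) H2)).
  destruct E as [|[a b] E0]; [exists Var; apply mgu_eqns_nil|].
  destruct a as [x|f ts], b as [y|g us].
  - destruct (Nat.eq_dec x y) as [<-|Hxy].
    + destruct (IHm E0) as [th Hth].
      * eapply Nat.le_lt_trans; [|exact Hn]. apply num_vars_incl.
        intros z Hz. simpl. auto.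
      * unfold eqns_size in *. simpl in Hm. lia.
      * destruct Hu as [tau Hu]. inversion Hu; eauto.
      * exists th. eapply mgu_eqns_equiv; [|exact Hth]. intros tau.
        unfold unifies_eqns. rewrite Forall_cons_iff. simpl. tauto.
    + apply mgu_eqns_var; [congruence|exact Hu|intros; apply IHvar; auto; lia].
  - apply mgu_eqns_var; [congruence|exact Hu|intros; apply IHvar; auto; lia].
  - assert (Hswap : forall tau, unifies_eqns tau ((Var y, Fun f ts) :: E0) <->
                                unifies_eqns tau ((Fun f ts, Var y) :: E0)).
    { intros tau. unfold unifies_eqns. rewrite !Forall_cons_iff. simpl.
      split; intros [? ?]; auto. }
    assert (Hnv : num_vars ((Var y, Fun f ts) :: E0) <= n).
    { apply Nat.lt_succ_r. eapply Nat.le_lt_trans; [|exact Hn]. apply num_vars_incl.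
      unfold eqns_vars. cbn [flat_map fst snd]. intros z Hz. rewrite !in_app_iff in *. tauto. }
    destruct (mgu_eqns_var y (Fun f ts) E0) as [th Hth];
      [congruence|destruct Hu as [tau Hu]; exists tau; apply Hswap; auto
      |intros; apply IHvar; auto; lia|].
    exists th. eapply mgu_eqns_equiv; [|exact Hth]. auto.
  - destruct Hu as [tau Hu]. inversion Hu as [|? ? Hfg HE0]; subst. simpl in Hfg.
    injection Hfg as <- Hargs.
    assert (Hl : length ts = length us).
    { rewrite <- (length_map (subst tau) ts), <- (length_map (subst tau) us). congruence. }
    assert (Hdec : forall tau', unifies_eqns tau' (combine ts us ++ E0) <->
                                unifies_eqns tau' ((Fun f ts, Fun f us) :: E0)).
    { intros tau'. unfold unifies_eqns. rewrite Forall_app, Forall_cons_iff.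
      fold (unifies_eqns tau' (combine ts us)). rewrite unifies_eqns_combine; auto. simpl.
      split; [intros [-> ?]; auto|intros [H ?]; injection H; auto]. }
    destruct (IHm (combine ts us ++ E0)) as [th Hth].
    + eapply Nat.le_lt_trans; [|exact Hn]. apply num_vars_incl.
      unfold eqns_vars. rewrite flat_map_app. fold (eqns_vars (combine ts us)).
      intros z Hz. apply in_app_or in Hz. destruct Hz as [Hz|Hz].
      * apply eqns_vars_combine in Hz. cbn [flat_map fst snd]. rewrite !vars_Fun.
        rewrite !in_app_iff in *. tauto.
      * cbn [flat_map fst snd]. rewrite !in_app_iff. tauto.
    + pose proof (eqns_size_combine ts us). unfold eqns_size in *.
      rewrite map_app, list_sum_app. simpl in Hm. lia.
    + exists tau. apply Hdec. auto.
    + exists th. eapply mgu_eqns_equiv; [|exact Hth]. exact Hdec.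
Qed.

Lemma mgu_exists (tau : nat -> term F) a b :
  unifies tau a b ->
  exists th, unifies th a b /\ forall tau', unifies tau' a b -> forall x, subst tau' (th x) = tau' x.
Proof.
  intros H.
  destruct (mgu_eqns_exists_bounded (S (num_vars [(a, b)])) (S (eqns_size [(a, b)])) [(a, b)])
    as [th [H1 H2]]; try apply Nat.lt_succ_diag_r.
  - exists tau. constructor; auto.
  - exists th. split; [inversion H1; auto|]. intros tau' Ht. apply H2. constructor; auto.
Qed.

(** * Critical overlaps *)

Definition proper_subterms_normal (R : trs F) (w : term F) : Prop :=
  forall q w', q <> [] -> subterm_at w q = Some w' -> normal_form R w'.

Definition prime_overlaps (R E : trs F) : trs F :=
  fun t u => exists s p, critical_peak R E t s u p /\ prime_peak R s p.

Definition swap_block (N x : nat) : nat :=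
  if x <? N then x + N else if x <? N + N then x - N else x.

Lemma swap_block_lt N x : x < N -> swap_block N x = x + N.
Proof. intros H. unfold swap_block. destruct (Nat.ltb_spec x N); lia. Qed.

Lemma swap_block_involutive N x : swap_block N (swap_block N x) = x.
Proof.
  unfold swap_block. destruct (Nat.ltb_spec x N).
  - destruct (Nat.ltb_spec (x + N) N); [lia|]. destruct (Nat.ltb_spec (x + N) (N + N)); lia.
  - destruct (Nat.ltb_spec x (N + N)).
    + destruct (Nat.ltb_spec (x - N) N); lia.
    + destruct (Nat.ltb_spec x N); [lia|]. destruct (Nat.ltb_spec x (N + N)); lia.
Qed.

Lemma rename_apart (V W : list nat) :
  exists pi, bijective_ren pi /\ (forall x, In x W -> ~ In (pi x) V) /\
    forall sg dl : nat -> term F, exists tau,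
      (forall x, In x V -> tau x = sg x) /\ (forall x, In x W -> tau (pi x) = dl x).
Proof.
  set (N := S (list_max (V ++ W))).
  assert (HN : forall x, In x (V ++ W) -> x < N).
  { intros x Hx. pose proof (proj1 (list_max_le (V ++ W) _) (le_n _)) as Hmax.
    rewrite Forall_forall in Hmax. specialize (Hmax x Hx). unfold N. lia. }
  exists (swap_block N). split; [|split].
  - exists (swap_block N). intros x. rewrite !swap_block_involutive. auto.
  - intros x Hx Hpx. rewrite swap_block_lt in Hpx by auto with datatypes.
    specialize (HN _ (in_or_app _ _ _ (or_introl Hpx))). lia.
  - intros sg dl. exists (fun y => if y <? N then sg y else dl (swap_block N y)). split.
    + intros x Hx. destruct (Nat.ltb_spec x N); auto.
      specialize (HN x (in_or_app _ _ _ (or_introl Hx))). lia.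
    + intros x Hx. specialize (HN x (in_or_app _ _ _ (or_intror Hx))).
      rewrite swap_block_lt by auto. destruct (Nat.ltb_spec (x + N) N); [lia|].
      rewrite <- (swap_block_lt N x), swap_block_involutive by auto. auto.
Qed.

Lemma in_vars_rename pi (t : term F) y :
  In y (vars (rename pi t)) -> exists z, In z (vars t) /\ y = pi z.
Proof.
  unfold rename. intros H. apply in_vars_subst in H. destruct H as [z [H1 H2]].
  simpl in H2. destruct H2 as [<-|[]]. eauto.
Qed.

Lemma prime_overlap_instance (R E : trs F) l r (sg : nat -> term F) q a l3 r3 dl :
  variant_of E l r -> R l3 r3 -> subterm_at l q = Some a -> (forall x, a <> Var x) ->
  q <> [] -> subst sg a = subst dl l3 -> proper_subterms_normal R (subst dl l3) ->
  exists t0 u0 rho, prime_overlaps R E t0 u0 /\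
    replace_at (subst sg l) q (subst dl r3) = subst rho t0 /\ subst sg r = subst rho u0.
Proof.
  intros Hv HR Ha Hnv Hq Heq Hnf.
  destruct (rename_apart (vars l ++ vars r) (vars l3 ++ vars r3)) as [pi [Hpi [Hdisj Hcomb]]].
  destruct (Hcomb sg dl) as [tau [Hsg Hdl]].
  set (l3' := rename pi l3). set (r3' := rename pi r3).
  assert (Hlow : forall t, incl (vars t) (vars l ++ vars r) -> subst tau t = subst sg t)
    by (intros t Ht; apply subst_ext_in; auto).
  assert (Hhigh : forall t, incl (vars t) (vars l3 ++ vars r3) ->
                            subst tau (rename pi t) = subst dl t).
  { intros t Ht. unfold rename. rewrite subst_comp. apply subst_ext_in.
    intros y Hy. simpl. auto. }
  assert (Ha' : subst tau a = subst sg a).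
  { apply Hlow. intros y Hy. apply (subterm_at_vars _ _ _ Ha) in Hy. auto with datatypes. }
  (* [tau] unifies [l3'] with [a]; it factors through an mgu [th], so the critical pair built
     from [th] has our pair as its [tau]-instance. *)
  destruct (mgu_exists tau l3' a) as [th [Hth Hmgu]].
  { unfold unifies, l3'. rewrite Hhigh, Ha'; auto with datatypes. }
  assert (Habs : forall t, subst tau (subst th t) = subst tau t).
  { intros t. rewrite subst_comp. apply subst_ext_in. intros y _. apply Hmgu.
    unfold unifies, l3'. rewrite Hhigh, Ha'; auto with datatypes. }
  assert (Hsub : subterm_at (subst th l) q = Some (subst th a)) by (apply subterm_at_subst; auto).
  exists (replace_at (subst th l) q (subst th r3')), (subst th r), tau. split; [|split].
  - exists (subst th l), q. split.
    + exists l3', r3', l, r, th, a.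
      split; [exists l3, r3; split; auto; exists pi; auto|].
      split; auto. split.
      { intros x Hx. rewrite in_app_iff in Hx.
        destruct Hx as [Hx|Hx]; apply in_vars_rename in Hx; destruct Hx as [z [Hz ->]];
          apply Hdisj; auto with datatypes. }
      split; auto. split; auto. split; [congruence|]. split; [|auto].
      split; auto. intros tau' Ht'. exists tau'. intros x. symmetry. apply Hmgu. auto.
    + intros sp Hsp q2 w Hq2 Hw. rewrite Hsub in Hsp. injection Hsp as <-.
      pose proof (subterm_at_subst tau _ _ _ Hw) as Hw'. rewrite Habs, Ha', Heq in Hw'.
      intros w1 [p1 Hp1]. apply (Hnf q2 _ Hq2 Hw' (subst tau w1)).
      exists p1. apply rstep_at_subst. auto.
  - rewrite (replace_at_subst _ _ _ _ _ Hsub), !Habs, Hlow; [unfold r3'; rewrite Hhigh|];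
      auto with datatypes.
  - rewrite Habs, Hlow; auto with datatypes.
Qed.

(** * Innermost redexes *)

Lemma innermost_redex_exists (R : trs F) w :
  (exists w', rstep R w w') ->
  exists q l r dl, R l r /\ subterm_at w q = Some (subst dl l) /\
                   proper_subterms_normal R (subst dl l).
Proof.
  induction w using term_nested_ind; intros [w' [p [l [r [dl [HR [Hw _]]]]]]].
  - destruct p; simpl in Hw; [|discriminate].
    exists [], l, r, dl. injection Hw as <-. repeat split; auto.
    intros [|] w2 Hq ?; [congruence|discriminate].
  - destruct (classic (exists i q w2 w3, subterm_at (Fun f ts) (i :: q) = Some w2 /\
                                         rstep R w2 w3))
      as [[i [q [w2 [w3 [Hs [q3 Hr]]]]]]|Hno].
    + simpl in Hs. destruct (nth_error ts i) as [a|] eqn:Ei; [|discriminate].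
      rewrite Forall_forall in H.
      destruct (H a (nth_error_In _ _ Ei)) as [q' [l' [r' [dl' [H1 [H2 H3]]]]]].
      * eexists. exists (q ++ q3). eapply rstep_at_ctx; eauto.
      * exists (i :: q'), l', r', dl'. simpl. rewrite Ei. auto.
    + exists p, l, r, dl. split; auto. destruct p as [|i p].
      * split; auto. simpl in Hw. injection Hw as <-.
        intros [|i q] w2 Hq Hs w3 Hr; [congruence|]. apply Hno. exists i, q, w2, w3. auto.
      * exfalso. apply Hno. exists i, p, (subst dl l), (subst dl r).
        split; auto. apply rstep_subst_root. auto.
Qed.

Lemma nonprime_innermost_redex {R : trs F} {s p sp} :
  subterm_at s p = Some sp -> ~ prime_peak R s p ->
  exists q l r dl, R l r /\ q <> [] /\ subterm_at sp q = Some (subst dl l) /\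
                   proper_subterms_normal R (subst dl l).
Proof.
  intros Hs Hnp.
  assert (Hred : exists q w w', q <> [] /\ subterm_at sp q = Some w /\ rstep R w w').
  { apply NNPP. intros Hc. apply Hnp. intros sp' Hsp' q w Hq Hw w' Hr.
    rewrite Hs in Hsp'. injection Hsp' as <-. apply Hc. exists q, w, w'. auto. }
  destruct Hred as [q [w [w' [Hq [Hw Hr]]]]].
  destruct (innermost_redex_exists R w (ex_intro _ w' Hr)) as [q3 [l [r [dl [H1 [H2 H3]]]]]].
  exists (q ++ q3), l, r, dl. repeat split; auto.
  - intros He. apply app_eq_nil in He. tauto.
  - rewrite (subterm_at_app _ _ _ _ Hw). auto.
Qed.

(* Left: the redex lies below a variable of [l]; right: it overlaps [l] critically. *)
Lemma inner_redex_split (R E : trs F) l r (sg : nat -> term F) s p q l3 r3 dl :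
  variant_of E l r -> R l3 r3 -> subterm_at s p = Some (subst sg l) -> q <> [] ->
  subterm_at (subst sg l) q = Some (subst dl l3) -> proper_subterms_normal R (subst dl l3) ->
  (exists sg', star_step R (replace_at s (p ++ q) (subst dl r3)) (replace_at s p (subst sg' l))
               /\ star_step R (replace_at s p (subst sg r)) (replace_at s p (subst sg' r))) \/
  rstep (prime_overlaps R E) (replace_at s (p ++ q) (subst dl r3)) (replace_at s p (subst sg r)).
Proof.
  intros Hv HR Hs Hq Hw Hnf. rewrite (replace_at_app _ _ _ _ _ Hs).
  destruct (subterm_at_subst_cases sg l q _ Hw)
    as [[a [Ha [Hnv Heq]]]|[q1 [q2 [x [-> [Hx Hw']]]]]].
  - right.
    destruct (prime_overlap_instance R E l r sg q a l3 r3 dl Hv HR Ha Hnv Hq (eq_sym Heq) Hnf)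
      as [t0 [u0 [rho [Hpo [-> ->]]]]].
    eapply rstep_replace_at; eauto. apply rstep_subst_root. auto.
  - left.
    destruct (step_below_variable R sg l q1 q2 x (subst dl l3) (subst dl r3) Hx Hw')
      as [sg' [H1 H2]]; [apply rstep_subst_root; auto|].
    exists sg'. split; eapply star_step_replace_at; eauto. apply star_step_subst. auto.
Qed.

Lemma inner_redex_split_R {R : trs F} {l r} {sg : nat -> term F} {s p q l3 r3 dl} :
  variant_of R l r -> R l3 r3 -> subterm_at s p = Some (subst sg l) -> q <> [] ->
  subterm_at (subst sg l) q = Some (subst dl l3) -> proper_subterms_normal R (subst dl l3) ->
  joinable R (replace_at s (p ++ q) (subst dl r3)) (replace_at s p (subst sg r)) \/
  rstep (PCP R) (replace_at s (p ++ q) (subst dl r3)) (replace_at s p (subst sg r)).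
Proof.
  intros Hv HR Hs Hq Hw Hnf.
  destruct (inner_redex_split R R l r sg s p q l3 r3 dl Hv HR Hs Hq Hw Hnf)
    as [[sg' [H1 H2]]|H]; [left|right; exact H].
  exists (replace_at s p (subst sg' r)). split; auto.
  eapply rt_trans; [exact H1|]. apply rt_step.
  eapply rstep_replace_at; eauto. apply rstep_variant. auto.
Qed.

Lemma inner_redex_split_B {R B : trs F} {l r} {sg : nat -> term F} {s p q l3 r3 dl} :
  variant_of (sym_pairs B) l r -> R l3 r3 -> subterm_at s p = Some (subst sg l) -> q <> [] ->
  subterm_at (subst sg l) q = Some (subst dl l3) -> proper_subterms_normal R (subst dl l3) ->
  joinable_mod R B (replace_at s (p ++ q) (subst dl r3)) (replace_at s p (subst sg r)) \/
  rstep (PCPpm R (sym_pairs B)) (replace_at s (p ++ q) (subst dl r3))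
        (replace_at s p (subst sg r)).
Proof.
  intros Hv HR Hs Hq Hw Hnf.
  destruct (inner_redex_split R (sym_pairs B) l r sg s p q l3 r3 dl Hv HR Hs Hq Hw Hnf)
    as [[sg' [H1 H2]]|H]; [left|right].
  - exists (replace_at s p (subst sg' l)), (replace_at s p (subst sg' r)).
    repeat split; auto. apply rt_step, rstep_sym_pairs_conv.
    eapply rstep_replace_at; eauto. apply rstep_variant. auto.
  - eapply rstep_mono; [|exact H]. intros t u [s0 [p0 [Hcp Hpr]]]. exists s0, p0. auto.
Qed.

Lemma critical_peak_shape {E1 E2 : trs F} {t s u p} :
  critical_peak E1 E2 t s u p ->
  exists l1 r1 l2 r2 sg, variant_of E1 l1 r1 /\ variant_of E2 l2 r2 /\
    subterm_at s p = Some (subst sg l1) /\ s = subst sg l2 /\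
    t = replace_at s p (subst sg r1) /\ u = subst sg r2.
Proof.
  intros (l1 & r1 & l2 & r2 & sg & l2p & Hv1 & Hv2 & _ & Hsub & _ & _ & [Hu _] & Hs & Ht & Hu').
  exists l1, r1, l2, r2, sg. repeat split; auto.
  rewrite Hs, Hu. apply subterm_at_subst. auto.
Qed.

Section PeakResolution.
Variables R B : trs F.

Lemma nonprime_peak_redex (sg : nat -> term F) l1 l2 s p :
  s = subst sg l2 -> subterm_at s p = Some (subst sg l1) -> ~ prime_peak R s p ->
  exists q l3 r3 dl, R l3 r3 /\ q <> [] /\ subterm_at (subst sg l1) q = Some (subst dl l3) /\
    subterm_at (subst sg l2) (p ++ q) = Some (subst dl l3) /\
    proper_subterms_normal R (subst dl l3) /\ rstep R s (replace_at s (p ++ q) (subst dl r3)).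
Proof.
  intros Hs Hsp Hnpr.
  destruct (nonprime_innermost_redex Hsp Hnpr) as (q & l3 & r3 & dl & HR3 & Hq & Hw & Hnf).
  assert (Hpq : subterm_at s (p ++ q) = Some (subst dl l3))
    by (rewrite (subterm_at_app _ _ _ _ Hsp); auto).
  exists q, l3, r3, dl. repeat split; auto; [rewrite <- Hs; auto|].
  rewrite <- (replace_at_subterm_at _ _ _ Hpq) at 1.
  eapply rstep_replace_at; eauto. apply rstep_subst_root. auto.
Qed.

Lemma critical_peak_R_B_resolved s t u p :
  critical_peak R (sym_pairs B) t s u p -> exists v, nabla R s t v /\ tnabla R B s v u.
Proof.
  intros Hcp.
  destruct (critical_peak_shape Hcp) as (l1 & r1 & l2 & r2 & sg & Hv1 & Hv2 & Hsp & Hs & Ht & Hu).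
  assert (Hst : rstep R s t) by (exists p; rewrite Ht; eapply rstep_at_variant; eauto).
  assert (Hsu : conv_step B s u)
    by (rewrite Hs, Hu; apply rstep_sym_pairs_conv, rstep_variant; auto).
  destruct (classic (prime_peak R s p)) as [Hpr|Hnpr].
  - exists t. split.
    + repeat split; try apply t_step; auto. left. exists t. split; apply rt_refl.
    + repeat split; [apply t_step|apply rt_step|]; auto.
      right. left. apply rstep_root. exists s, p. auto.
  - destruct (nonprime_peak_redex sg l1 l2 s p Hs Hsp Hnpr)
      as (q & l3 & r3 & dl & HR3 & Hq & Hw & Hpq & Hnf & Hsv).
    exists (replace_at s (p ++ q) (subst dl r3)). split.
    + repeat split; try apply t_step; auto. rewrite Ht.
      destruct (inner_redex_split_R Hv1 HR3 Hsp Hq Hw Hnf) as [[w [? ?]]|?].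
      * left. exists w. auto.
      * right. right. auto.
    + repeat split; [apply t_step|apply rt_step|]; auto. rewrite Hu.
      destruct (inner_redex_split_B (s := s) (p := []) Hv2 HR3 (f_equal Some Hs)
                  (app_neq_nil_r p Hq) Hpq Hnf);
        [left|right; left]; assumption.
Qed.

Lemma critical_peak_B_R_resolved s t u p :
  critical_peak (sym_pairs B) R t s u p -> exists v, tnabla R B s v t /\ nabla R s v u.
Proof.
  intros Hcp.
  destruct (critical_peak_shape Hcp) as (l1 & r1 & l2 & r2 & sg & Hv1 & Hv2 & Hsp & Hs & Ht & Hu).
  assert (Hst : conv_step B s t)
    by (rewrite Ht; apply rstep_sym_pairs_conv; exists p; eapply rstep_at_variant; eauto).
  assert (Hsu : rstep R s u) by (rewrite Hs, Hu; apply rstep_variant; auto).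
  destruct (classic (prime_peak R s p)) as [Hpr|Hnpr].
  - exists u. split.
    + repeat split; [apply t_step|apply rt_step|]; auto.
      right. right. apply rstep_root. exists s, p. auto.
    + repeat split; try apply t_step; auto. left. exists u. split; apply rt_refl.
  - destruct (nonprime_peak_redex sg l1 l2 s p Hs Hsp Hnpr)
      as (q & l3 & r3 & dl & HR3 & Hq & Hw & Hpq & Hnf & Hsv).
    exists (replace_at s (p ++ q) (subst dl r3)). split.
    + repeat split; [apply t_step|apply rt_step|]; auto. rewrite Ht.
      destruct (inner_redex_split_B Hv1 HR3 Hsp Hq Hw Hnf); [left|right; left]; assumption.
    + repeat split; try apply t_step; auto. rewrite Hu.
      destruct (inner_redex_split_R (s := s) (p := []) Hv2 HR3 (f_equal Some Hs)
                  (app_neq_nil_r p Hq) Hpq Hnf);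
        [left|right; left]; assumption.
Qed.

End PeakResolution.

End Rewriting.

(* None of the three hypotheses is needed; see [step_below_variable]. *)
Theorem lemma3p14 (F : Type) (R B : trs F) :
  is_trs R -> left_linear R -> same_vars_es B ->
  (forall s t u p, critical_peak R (sym_pairs B) t s u p ->
     exists v, nabla R s t v /\ tnabla R B s v u) /\
  (forall s t u p, critical_peak (sym_pairs B) R t s u p ->
     exists v, tnabla R B s v t /\ nabla R s v u).
Proof.
  intros _ _ _. split.
  - apply critical_peak_R_B_resolved.
  - apply critical_peak_B_R_resolved.
Qed.
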